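(* Let $R=\bigoplus_{\alpha\in\Gamma}R_{\alpha}$ be a graded integral domain and let $\star$ be a semistar operation on $R$ such that $R^{\star}\subsetneq R_H$. Then every invertible ideal of $\mathrm{NA}(R,\star)$ is principal.
   Context: $\Gamma$ is a commutative cancellative monoid (written additively) whose quotient group $\langle\Gamma\rangle$ is torsion-free. A graded integral domain $R=\bigoplus_{\alpha\in\Gamma}R_\alpha$ is an integral domain that is the direct sum of additive subgroups $R_\alpha$ with $R_\alpha R_\beta\subseteq R_{\alpha+\beta}$. $K$ is its quotient field, $H$ the set of nonzero homogeneous elements of $R$, and $R_H$ the homogeneous quotient field. For $a\in R_H$, $C(a)$ is the $R$-submodule of $R_H$ generated by the homogeneous components of $a$; for $f=f_0+\cdots+f_nX^n\in R[X]$, $A_f:=\sum_i C(f_i)$. A semistar operation on $R$ is a map $\star$ from the set $\overline{\mathcal F}(R)$ of nonzero $R$-submodules of $K$ to itself, $E\mapsto E^\star$, such that for all $0\ne x\in K$ and $E,F$: $(xE)^\star=xE^\star$; $E\subseteq F\Rightarrow E^\star\subseteq F^\star$; $E\subseteq E^\star$; $(E^\star)^\star=E^\star$. $N(\star):=\{f\in R[X]: f\ne0,\ A_f^\star=R^\star\}$ and $\mathrm{NA}(R,\star):=R[X]_{N(\star)}$. *)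

From HB Require Import structures.
From mathcomp Require Import all_boot all_order all_algebra.
Set Implicit Arguments. Unset Strict Implicit. Unset Printing Implicit Defensive.
Import Order.TTheory GRing.Theory Num.Theory.
Local Open Scope ring_scope.

Section Sets.
Variable T : Type.
Definition subset (A B : T -> Prop) := forall x, A x -> B x.
Definition seteq (A B : T -> Prop) := forall x, A x <-> B x.
Definition psubset (A B : T -> Prop) := subset A B /\ exists x, B x /\ ~ A x.
End Sets.

Section Modules.
Variable L : comNzRingType.
Definition is_subring (D : L -> Prop) :=
  [/\ D 0, D 1, (forall x y, D x -> D y -> D (x - y)) &
      (forall x y, D x -> D y -> D (x * y))].
Definition is_submod (D E : L -> Prop) :=
  [/\ E 0, (forall x y, E x -> E y -> E (x + y)) &
      (forall d x, D d -> E x -> E (d * x))].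
Definition nz_submod (D E : L -> Prop) := is_submod D E /\ exists x, E x /\ x != 0.
Definition gen_mod (D S : L -> Prop) : L -> Prop := fun x =>
  exists (n : nat) (c v : nat -> L),
    (forall i, (i < n)%N -> D (c i) /\ S (v i)) /\ x = \sum_(i < n) c i * v i.
Definition prod_mod (I J : L -> Prop) : L -> Prop := fun x =>
  exists (n : nat) (a b : nat -> L),
    (forall i, (i < n)%N -> I (a i) /\ J (b i)) /\ x = \sum_(i < n) a i * b i.
Definition scale_set (x : L) (E : L -> Prop) : L -> Prop :=
  fun y => exists e, E e /\ y = x * e.
Definition is_ideal (D I : L -> Prop) := subset I D /\ is_submod D I.
(* I is an invertible ideal of D (L is the quotient field of D):
   I J = D for some D-submodule J of L *)
Definition invertible_ideal (D I : L -> Prop) :=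
  is_ideal D I /\ exists J, is_submod D J /\ seteq (prod_mod I J) D.
Definition principal_ideal (D I : L -> Prop) :=
  exists x, D x /\ seteq I (scale_set x D).
End Modules.

(* Gamma is a submonoid of the torsion-free abelian group G (so Gamma is a
   commutative cancellative monoid whose quotient group, a subgroup of G,
   is torsion-free); R is a subring of the field K, K is its quotient field,
   and Rg a is the homogeneous component R_a (a in Gamma), with
   R = (+)_{a in Gamma} R_a. *)
Record graded_domain (G : zmodType) (K : fieldType) (Gam : G -> Prop)
    (R : K -> Prop) (Rg : G -> K -> Prop) : Prop := {
  gd_torsionfree : forall (n : nat) (x : G), (0 < n)%N -> x *+ n = 0 -> x = 0;
  gd_mon0 : Gam 0;
  gd_monD : forall a b, Gam a -> Gam b -> Gam (a + b);
  gd_subring : is_subring R;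
  gd_quotfield : forall x : K, exists a b, [/\ R a, R b, b != 0 & x = a / b];
  gd_compR : forall a, Gam a -> subset (Rg a) R;
  gd_comp0 : forall a, Gam a -> Rg a 0;
  gd_compB : forall a x y, Gam a -> Rg a x -> Rg a y -> Rg a (x - y);
  gd_compM : forall a b x y, Gam a -> Gam b -> Rg a x -> Rg b y -> Rg (a + b) (x * y);
  gd_decomp : forall r, R r -> exists (s : seq G) (f : G -> K),
      [/\ uniq s, (forall a, a \in s -> Gam a /\ Rg a (f a)) &
          r = \sum_(a <- s) f a];
  gd_indep : forall (s : seq G) (f : G -> K), uniq s ->
      (forall a, a \in s -> Gam a /\ Rg a (f a)) ->
      \sum_(a <- s) f a = 0 -> forall a, a \in s -> f a = 0
}.

Section Graded.
Variables (G : zmodType) (K : fieldType) (Gam : G -> Prop)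
  (R : K -> Prop) (Rg : G -> K -> Prop).

Definition homogeneous (x : K) := exists a, Gam a /\ Rg a x.
Definition RH : K -> Prop := fun x =>
  exists a h, [/\ R a, homogeneous h, h != 0 & x = a / h].
Definition hcomp (r x : K) := exists (s : seq G) (f : G -> K) (a : G),
  [/\ uniq s, (forall b, b \in s -> Gam b /\ Rg b (f b)),
      r = \sum_(b <- s) f b, a \in s & x = f a].
Definition Cont (r : K) : K -> Prop := gen_mod R (hcomp r).
Definition polyR (f : {poly K}) := forall i, R f`_i.
Definition Af (f : {poly K}) : K -> Prop :=
  gen_mod R (fun x => exists i, (i < size f)%N /\ hcomp f`_i x).

Variable star : (K -> Prop) -> (K -> Prop).
Definition semistar :=
  [/\ (forall E, nz_submod R E -> nz_submod R (star E)),
      (forall (x : K) E, x != 0 -> nz_submod R E ->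
          seteq (star (scale_set x E)) (scale_set x (star E))),
      (forall E F, nz_submod R E -> nz_submod R F -> subset E F ->
          subset (star E) (star F)),
      (forall E, nz_submod R E -> subset E (star E)) &
      (forall E, nz_submod R E -> seteq (star (star E)) (star E))].

Definition Nstar (f : {poly K}) :=
  [/\ polyR f, f != 0 & seteq (star (Af f)) (star R)].

Definition NA : {fraction {poly K}} -> Prop := fun z =>
  exists f g, [/\ polyR f, Nstar g & z = FracField.tofrac f / FracField.tofrac g].
End Graded.

From Pilot Require Import Defs.
From HB Require Import structures.
From mathcomp Require Import all_boot all_order all_algebra.
From mathcomp Require Import zify ring.
From mathcomp Require classical_sets.
From Stdlib Require Import Classical ClassicalEpsilon FunctionalExtensionality PropExtensionality.
(* Re-imported so that [Defs.subset] shadows [fintype.subset]. *)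
Import Pilot.Defs.
Set Implicit Arguments. Unset Strict Implicit. Unset Printing Implicit Defensive.
Import GRing.Theory.
Local Open Scope ring_scope.

(* N(⋆) is multiplicatively closed: if A_f^⋆ = A_g^⋆ = R^⋆ but 1 ∉ A_fg^⋆, Zorn's lemma
   gives a prime ideal M of R containing the homogeneous components of the coefficients of
   fg such that 1 ∉ (L + A_fg)^⋆ for every finitely generated L ⊆ M.  Ordering the
   torsion-free group Γ, a leading-term argument (a graded Gauss lemma) puts all homogeneous
   components of the coefficients of f, or all those of g, into M; then A_f ⊆ M or A_g ⊆ M,
   contradicting 1 ∈ A_f^⋆ = A_g^⋆.  So NA(R,⋆) = R[X]_N(⋆) is a ring.
   If I is invertible, write 1 = Σ a_i b_i with a_i ∈ I, b_i ∈ I⁻¹, and a_i b_j = p_ij / Q.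
   For D large, x = Σ X^(Di) a_i ∈ I and y = Σ X^(Dnj) b_j ∈ I⁻¹ satisfy xy = P / Q where
   the coefficients of P are those of the p_ij laid out in disjoint blocks.  Since
   Q = Σ p_ii, this gives A_Q ⊆ A_P, hence P ∈ N(⋆), xy is a unit of NA(R,⋆) and
   I = x NA(R,⋆). *)

Lemma Zorn_maximal (T : Type) (P : (T -> Prop) -> Prop) :
  (forall F : (T -> Prop) -> Prop, (forall X, F X -> P X) ->
     (forall X Y, F X -> F Y -> subset X Y \/ subset Y X) ->
     P (fun x => exists2 X, F X & X x)) ->
  exists2 A, P A & forall B, P B -> subset A B -> subset B A.
Proof.
move=> chainP; have [A [PA Amax]] := classical_sets.Zorn_bigcup chainP.
exists A => // B PB AB x Bx; apply: NNPP => nAx; apply: (Amax B) => //.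
by split=> // BA; apply: nAx; exact: BA.
Qed.

Lemma chain_bigcup_seq (T : eqType) (F : (T -> Prop) -> Prop) (L : seq T) :
  (forall X Y, F X -> F Y -> subset X Y \/ subset Y X) ->
  (forall x, x \in L -> exists2 X, F X & X x) ->
  L = [::] \/ exists2 X, F X & forall x, x \in L -> X x.
Proof.
move=> Ftot; elim: L => [|y L IH] HL; [by left | right].
have [Y FY Yy] := HL y (mem_head _ _).
have HL' x : x \in L -> exists2 X, F X & X x by move=> xL; apply: HL; rewrite inE xL orbT.
have [->|[X FX XL]] := IH HL'.
  by exists Y => // x; rewrite mem_seq1 => /eqP ->.
have [XY|YX] := Ftot X Y FX FY.
  by exists Y => // x; rewrite inE => /orP[/eqP -> // | /XL/XY].
by exists X => // x; rewrite inE => /orP[/eqP ->|/XL //]; exact: YX.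
Qed.

Lemma max_seq (T : eqType) (le : T -> T -> Prop) (P : T -> Prop) (s : seq T) :
  (forall x y, le x y \/ le y x) -> (forall x y z, le x y -> le y z -> le x z) ->
  (exists2 x, x \in s & P x) ->
  exists m, [/\ m \in s, P m & forall x, x \in s -> P x -> le x m].
Proof.
move=> le_total le_trans; have le_refl x : le x x by case: (le_total x x).
elim: s => [[x //]|y s IH] exPs.
have [/IH [m [ms Pm m_max]]|nPs] := classic (exists2 x, x \in s & P x).
  have [Py|nPy] := classic (P y); last first.
    exists m; split=> [|//|x]; first by rewrite inE ms orbT.
    by rewrite inE => /orP[/eqP -> //|/m_max].
  have [ym|my] := le_total y m.
    exists m; split=> [|//|x]; first by rewrite inE ms orbT.
    by rewrite inE => /orP[/eqP -> //|/m_max].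
  exists y; split=> [|//|x]; first exact: mem_head.
  by rewrite inE => /orP[/eqP -> //|xs /(m_max x xs) xm]; exact: le_trans my.
have Py : P y.
  by case: exPs => x; rewrite inE => /orP[/eqP -> //|xs Px]; case: nPs; exists x.
exists y; split=> [|//|x]; first exact: mem_head.
by rewrite inE => /orP[/eqP -> //|xs Px]; case: nPs; exists x.
Qed.

Section TorsionFreeOrder.
Variable G : zmodType.
Hypothesis torsionfree : forall (n : nat) (x : G), (0 < n)%N -> x *+ n = 0 -> x = 0.

Definition cone (C : G -> Prop) :=
  [/\ forall x y, C x -> C y -> C (x + y), forall x, C x -> C (- x) -> x = 0 &
      forall n x, (0 < n)%N -> C (x *+ n) -> C x].

Lemma cone_bigcup (F : (G -> Prop) -> Prop) :
  (forall C, F C -> cone C) -> (forall X Y, F X -> F Y -> subset X Y \/ subset Y X) ->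
  cone (fun x => exists2 C, F C & C x).
Proof.
move=> Fcone Ftot; have two x y : (exists2 C, F C & C x) -> (exists2 C, F C & C y) ->
    exists2 C, F C & C x /\ C y.
  move=> [C FC Cx] [D FD Dy]; have [CD|DC] := Ftot C D FC FD.
    by exists D => //; split=> //; exact: CD.
  by exists C => //; split=> //; exact: DC.
split.
- move=> x y Cx Cy; have [C FC [{}Cx {}Cy]] := two x y Cx Cy.
  by exists C => //; case: (Fcone C FC) => CD _ _; exact: CD.
- move=> x Cx Cnx; have [C FC [{}Cx {}Cnx]] := two _ _ Cx Cnx.
  by case: (Fcone C FC) => _ CN _; exact: CN.
- move=> n x n0 [C FC Cx]; exists C => //.
  by case: (Fcone C FC) => _ _ CR; exact: CR n0 Cx.
Qed.

Lemma cone_add0 C : cone C -> cone (fun x => C x \/ x = 0).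
Proof.
case=> CD CN CR; split.
- by move=> x y [Cx|->] [Cy|->]; rewrite ?addr0 ?add0r; auto.
- move=> x [Cx|//] [Cnx|/eqP]; first exact: CN.
  by rewrite oppr_eq0 => /eqP.
- by move=> n x n0 [Cx|x0]; [left; exact: CR n0 Cx | right; exact: torsionfree n0 x0].
Qed.

Lemma cone_mulrn C a n : cone C -> C 0 -> C a -> C (a *+ n).
Proof. by case=> CD _ _ C0 Ca; elim: n => [|n IH]; rewrite ?mulr0n // mulrS; exact: CD. Qed.

(* The cone generated by C and x, saturated under division by positive integers. *)
Lemma cone_adjoin C x : cone C -> C 0 -> ~ C (- x) ->
  cone (fun y => exists m k a, [/\ (0 < m)%N, C a & y *+ m = a + x *+ k]).
Proof.
move=> Ccone C0 nCnx; have [CD CN CR] := Ccone.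
have CMn a n : C a -> C (a *+ n) by exact: cone_mulrn.
split.
- move=> y y' [m [k [a [m0 Ca Ey]]]] [m' [k' [a' [m0' Ca' Ey']]]].
  exists (m * m')%N, (k * m' + k' * m)%N, (a *+ m' + a' *+ m); split.
  + by rewrite muln_gt0 m0 m0'.
  + by apply: CD; apply: CMn.
  + rewrite mulrnDl mulrnA mulnC mulrnA Ey Ey' !mulrnDl mulrnDr -!mulrnA.
    by rewrite addrACA [(k' * m)%N]mulnC.
- move=> y [m [k [a [m0 Ca Ey]]]] [m' [k' [a' [m0' Ca' Ey']]]].
  have sum0 : (a *+ m' + a' *+ m) + x *+ (k * m' + k' * m) = 0.
    rewrite mulrnDr !mulrnA addrACA -mulrnDl -Ey -mulrnDl -Ey'.
    by rewrite !mulNrn -!mulrnA mulnC subrr.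
  have [km0|km0] := posnP (k * m' + k' * m).
    have [k0 k'0] : k = 0%N /\ k' = 0%N by lia.
    move: sum0 Ey; rewrite k0 k'0 !mulr0n !addr0.
    move=> /eqP; rewrite addr_eq0 => /eqP am Ey.
    have a0 : a = 0.
      apply: torsionfree m0' _; apply: CN; first exact: CMn.
      by rewrite am opprK; exact: CMn.
    by apply: torsionfree m0 _; rewrite Ey a0.
  case: nCnx; apply: CR km0 _; rewrite mulNrn.
  by move/eqP: sum0; rewrite addrC addr_eq0 => /eqP ->; rewrite opprK; apply: CD; exact: CMn.
- move=> n y n0 [m [k [a [m0 Ca Ey]]]]; exists (n * m)%N, k, a.
  by rewrite muln_gt0 n0 m0 mulrnA.
Qed.

Lemma torsionfree_order : exists le : G -> G -> Prop,
  [/\ forall x y, le x y \/ le y x, forall x y z, le x y -> le y z -> le x z,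
      forall x y, le x y -> le y x -> x = y & forall x y z, le x y -> le (x + z) (y + z)].
Proof.
have [C Ccone Cmax] := Zorn_maximal cone_bigcup.
have [CD CN CR] := Ccone.
have C0 : C 0 by apply: (Cmax _ (cone_add0 Ccone)); [move=> x; left | right].
have Ctotal x : C x \/ C (- x).
  apply: NNPP => /not_or_and [nCx nCnx]; apply: nCx.
  apply: (Cmax _ (cone_adjoin Ccone C0 nCnx)).
    by move=> y Cy; exists 1%N, 0%N, y; rewrite mulr0n addr0.
  by exists 1%N, 1%N, 0; rewrite add0r.
exists (fun x y => C (y - x)); split.
- by move=> x y; case: (Ctotal (y - x)); rewrite ?opprB; [left|right].
- by move=> x y z Cxy Cyz; have := CD _ _ Cyz Cxy; rewrite addrA subrK.
- by move=> x y Cxy Cyx; apply/eqP; rewrite eq_sym -subr_eq0; apply/eqP; apply: CN; rewrite ?opprB.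
- by move=> x y z; rewrite opprD addrACA subrr addr0.
Qed.
End TorsionFreeOrder.

Section Submodules.
Variables (L : comNzRingType) (D : L -> Prop).
Hypothesis D_subring : is_subring D.

Lemma subring0 : D 0. Proof. by case: D_subring. Qed.
Lemma subring1 : D 1. Proof. by case: D_subring. Qed.
Lemma subringB x y : D x -> D y -> D (x - y). Proof. by case: D_subring => _ _ DB _; exact: DB. Qed.
Lemma subringM x y : D x -> D y -> D (x * y). Proof. by case: D_subring => _ _ _ DM; exact: DM. Qed.
Lemma subringN x : D x -> D (- x). Proof. by rewrite -sub0r; apply: subringB; exact: subring0. Qed.
Lemma subringD x y : D x -> D y -> D (x + y).
Proof. by move=> Dx Dy; rewrite -[y]opprK; apply: subringB Dx (subringN Dy). Qed.

Lemma subring_submod : is_submod D D.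
Proof. by split; [exact: subring0 | exact: subringD | exact: subringM]. Qed.

Lemma gen_mod_sub (S : L -> Prop) x : S x -> gen_mod D S x.
Proof.
move=> Sx; exists 1%N, (fun _ => 1), (fun _ => x); split; last by rewrite big_ord1 mul1r.
by move=> i _; split=> //; exact: subring1.
Qed.

Lemma gen_mod_submod (S : L -> Prop) : is_submod D (gen_mod D S).
Proof.
split.
- by exists 0%N, (fun _ => 0), (fun _ => 0); rewrite big_ord0.
- move=> _ _ [n1 [c1 [v1 [H1 ->]]]] [n2 [c2 [v2 [H2 ->]]]].
  exists (n1 + n2)%N, (fun i => if (i < n1)%N then c1 i else c2 (i - n1)%N),
    (fun i => if (i < n1)%N then v1 i else v2 (i - n1)%N); split.
    by move=> i ilt; case: ifP => il; [exact: H1 | apply: H2; lia].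
  rewrite big_split_ord /=; congr (_ + _); apply: eq_bigr => i _ /=.
    by rewrite ltn_ord.
  by rewrite ltnNge leq_addr /= addKn.
- move=> d _ Dd [n [c [v [H ->]]]]; exists n, (fun i => d * c i), v; split.
    by move=> i il; have [Dc Sv] := H i il; split=> //; exact: subringM.
  by rewrite mulr_sumr; apply: eq_bigr => i _; rewrite mulrA.
Qed.

Lemma gen_mod0 (S : L -> Prop) : gen_mod D S 0.
Proof. by case: (gen_mod_submod S). Qed.

Lemma gen_modD (S : L -> Prop) x y : gen_mod D S x -> gen_mod D S y -> gen_mod D S (x + y).
Proof. by case: (gen_mod_submod S) => _ SD _; exact: SD. Qed.

Lemma gen_modM (S : L -> Prop) d x : D d -> gen_mod D S x -> gen_mod D S (d * x).
Proof. by case: (gen_mod_submod S) => _ _ SM; exact: SM. Qed.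

Lemma gen_mod_min (S E : L -> Prop) : is_submod D E -> subset S E -> subset (gen_mod D S) E.
Proof.
move=> [E0 ED EM] SE x [n [c [v [H ->]]]].
by apply: big_ind => // i _; have [Dc Sv] := H i (ltn_ord i); apply: EM => //; exact: SE.
Qed.

Lemma gen_mod_mono (S T : L -> Prop) : subset S T -> subset (gen_mod D S) (gen_mod D T).
Proof. by move=> ST; apply: gen_mod_min (gen_mod_submod T) _ => x /ST /gen_mod_sub. Qed.

Lemma nz_submod_superset (E F : L -> Prop) :
  nz_submod D E -> is_submod D F -> subset E F -> nz_submod D F.
Proof. by move=> [_ [x [Ex x0]]] Fsub EF; split=> //; exists x; split=> //; exact: EF. Qed.

Lemma gen_mod_mul (S T U : L -> Prop) :
  (forall s t, S s -> T t -> gen_mod D U (s * t)) ->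
  forall e f, gen_mod D S e -> gen_mod D T f -> gen_mod D U (e * f).
Proof.
have [U0 UD UM] := gen_mod_submod U.
move=> ST e f Se Tf; apply: (gen_mod_min (E := fun x => gen_mod D U (x * f))) Se.
  split=> [|x y|d x Dd]; rewrite ?mul0r ?mulrDl -?mulrA //; [exact: UD | exact: UM].
move=> s Ss; apply: (gen_mod_min (E := fun y => gen_mod D U (s * y))) Tf => [|t Tt]; last exact: ST.
split=> [|x y|d x Dd]; rewrite ?mulr0 ?mulrDr //; first exact: UD.
by rewrite mulrCA; exact: UM.
Qed.
End Submodules.


Section KroneckerBlocks.
Variables (A : nzSemiRingType) (D m : nat) (p : 'I_m -> {poly A}).
Hypothesis size_p : forall i, (size (p i) <= D)%N.

Lemma coef_sum_mulXn_blocks (k : 'I_m) t : (t < D)%N ->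
  (\sum_(i < m) p i * 'X^(D * i))`_(D * k + t) = (p k)`_t.
Proof.
move=> tD; rewrite coef_sum (bigD1 k) //= coefMXn ltnNge leq_addr /= addKn.
rewrite big1 ?addr0 // => i ik; rewrite coefMXn; case: ltnP => // le.
have /leq_sizeP -> // := size_p i; have : (i : nat) != k by [].
case: (ltngtP i k) => // [ik'|ki] _.
  by have := leq_mul2l D i.+1 k; rewrite ik' orbT mulnS; lia.
by have := leq_mul2l D k.+1 i; rewrite ki orbT mulnS; lia.
Qed.

Lemma size_sum_mulXn_blocks : (size (\sum_(i < m) p i * 'X^(D * i))%R <= D * m)%N.
Proof.
apply/leq_sizeP => j jDm; rewrite coef_sum big1 // => i _; rewrite coefMXn; case: ltnP => // le.
have /leq_sizeP -> // := size_p i; have := leq_mul2l D i.+1 m; rewrite ltn_ord orbT mulnS; lia.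
Qed.
End KroneckerBlocks.

Section Kronecker.
Variables (A : nzSemiRingType) (n D : nat) (p : 'I_n * 'I_n -> {poly A}).
Hypothesis size_p : forall ij, (size (p ij) <= D)%N.

Definition kronecker := \sum_(j < n) (\sum_(i < n) p (i, j) * 'X^(D * i)) * 'X^(D * n * j).

Lemma coef_kronecker (i j : 'I_n) t : (t < D)%N ->
  kronecker`_(D * n * j + (D * i + t)) = (p (i, j))`_t.
Proof.
move=> tD; rewrite coef_sum_mulXn_blocks => [|j'|]; first exact: coef_sum_mulXn_blocks.
  exact: size_sum_mulXn_blocks.
by have := leq_mul2l D i.+1 n; rewrite ltn_ord orbT mulnS; lia.
Qed.

Lemma coef_kronecker_exists ij t : exists s, (p ij)`_t = kronecker`_s.
Proof.
case: ij => i j; have [tD|Dt] := ltnP t D.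
  by exists (D * n * j + (D * i + t))%N; rewrite coef_kronecker.
by exists (size kronecker); rewrite !nth_default // (leq_trans (size_p _) Dt).
Qed.

Lemma kronecker_eq0 : kronecker = 0 -> forall ij, p ij = 0.
Proof.
move=> P0 ij; apply/polyP => t; rewrite coef0.
by have [s ->] := coef_kronecker_exists ij t; rewrite P0 coef0.
Qed.
End Kronecker.

Section PolyOver.
Variables (K : fieldType) (R : K -> Prop).
Hypothesis R_subring : is_subring R.

Lemma polyR_sum (I : Type) (r : seq I) (F : I -> {poly K}) :
  (forall i, polyR R (F i)) -> polyR R (\sum_(i <- r) F i).
Proof.
move=> RF t; rewrite coef_sum.
by apply: big_ind => [|x y|i _]; [exact: subring0 | exact: subringD | exact: RF].
Qed.

Lemma polyR_mul p q : polyR R p -> polyR R q -> polyR R (p * q).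
Proof.
move=> Rp Rq t; rewrite coefM; apply: big_ind => [|x y|j _]; [exact: subring0 | exact: subringD |].
exact: (subringM R_subring (Rp j) (Rq _)).
Qed.

Lemma polyR_Xn k : polyR R 'X^k.
Proof. by move=> t; rewrite coefXn; case: eqP => _; [exact: subring1 | exact: subring0]. Qed.

Lemma polyR_kronecker n D (p : 'I_n * 'I_n -> {poly K}) :
  (forall ij, polyR R (p ij)) -> polyR R (kronecker D p).
Proof.
move=> Rp; apply: polyR_sum => j; apply: polyR_mul (polyR_Xn _).
by apply: polyR_sum => i; apply: polyR_mul (polyR_Xn _).
Qed.
End PolyOver.

Lemma principal_of_unit_mul (F : fieldType) (D I J : F -> Prop) x y :
  (forall u v, D u -> D v -> D (u * v)) -> is_ideal D I -> (forall u v, I u -> J v -> D (u * v)) ->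
  I x -> J y -> x * y != 0 -> D (x * y)^-1 -> principal_ideal D I.
Proof.
move=> DM [ID [_ _ IM]] IJ Ix Jy xy0 Dinv; exists x; split; first exact: ID.
move=> z; split=> [Iz|[w [Dw ->]]]; last by rewrite mulrC; exact: IM.
exists (z * y * (x * y)^-1); split; first exact: DM (IJ _ _ Iz Jy) Dinv.
by rewrite mulrA mulrCA mulfK.
Qed.

Definition prime_closed (L : comNzRingType) (D M : L -> Prop) :=
  forall a b, D a -> D b -> M (a * b) -> M a \/ M b.

Section Semistar.
Variables (K : fieldType) (R : K -> Prop) (star : (K -> Prop) -> (K -> Prop)).
Hypotheses (R_subring : is_subring R) (star_semistar : semistar R star).

Lemma nz_submod_R : nz_submod R R.
Proof.
by split; [exact: subring_submod | exists 1; split; [exact: subring1 | exact: oner_neq0]].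
Qed.

Lemma nz_submod_scale x E : x != 0 -> nz_submod R E -> nz_submod R (scale_set x E).
Proof.
move=> x0 [[E0 ED EM] [e [Ee e0]]]; split; last first.
  by exists (x * e); split; [exists e | rewrite mulf_neq0].
split; first by exists 0; rewrite mulr0.
- by move=> _ _ [a [Ea ->]] [b [Eb ->]]; exists (a + b); rewrite mulrDr; split=> //; exact: ED.
- by move=> d _ Rd [a [Ea ->]]; exists (d * a); rewrite mulrCA; split=> //; exact: EM.
Qed.

Lemma star_nz E : nz_submod R E -> nz_submod R (star E).
Proof. by case: star_semistar => H _ _ _ _; exact: H. Qed.

Lemma star_mono E F : nz_submod R E -> nz_submod R F -> subset E F -> subset (star E) (star F).
Proof. by case: star_semistar => _ _ H _ _; exact: H. Qed.

Lemma star_ext E : nz_submod R E -> subset E (star E).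
Proof. by case: star_semistar => _ _ _ H _; exact: H. Qed.

Lemma star_idem E : nz_submod R E -> subset (star (star E)) (star E).
Proof. by case: star_semistar => _ _ _ _ H /H E1 x /E1. Qed.

Lemma star_scale x E y : x != 0 -> nz_submod R E -> star E y -> star (scale_set x E) (x * y).
Proof. by case: star_semistar => _ H _ _ _ x0 /(H x E x0) Es Ey; apply/Es; exists y. Qed.

Lemma star0 E : nz_submod R E -> star E 0.
Proof. by case/star_nz => -[]. Qed.

Lemma star_mul E F U : nz_submod R E -> nz_submod R F -> nz_submod R U ->
  (forall e f, E e -> F f -> U (e * f)) -> forall x y, star E x -> star F y -> star U (x * y).
Proof.
move=> E1 F1 U1 EFU x y Ex Fy.
have Uy e : E e -> star U (e * y).
  move=> Ee; have [->|e0] := eqVneq e 0; first by rewrite mul0r; exact: star0.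
  apply: (star_mono (nz_submod_scale e0 F1) U1); last exact: star_scale.
  by move=> _ [f [Ff ->]]; exact: EFU.
have [->|y0] := eqVneq y 0; first by rewrite mulr0; exact: star0.
rewrite mulrC; apply: star_idem => //; apply: (star_mono (nz_submod_scale y0 E1) (star_nz U1)).
  by move=> _ [e [Ee ->]]; rewrite mulrC; exact: Uy.
exact: star_scale.
Qed.

Lemma star_eq_starR E : nz_submod R E -> subset E R -> star E 1 -> seteq (star E) (star R).
Proof.
move=> E1 ER E1s z; split; first exact: star_mono nz_submod_R ER z.
move=> Rz; apply: star_idem => //; apply: (star_mono nz_submod_R (star_nz E1)) Rz.
by move=> r Rr; have [[_ _ EM] _] := star_nz E1; rewrite -[r]mulr1; exact: EM.
Qed.

Section PrimeAvoiding.
Variable S0 : seq K.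
Hypotheses (S0_R : forall x, x \in S0 -> R x) (S0_nz : exists2 x, x \in S0 & x != 0).
Hypothesis S0_avoid : ~ star (gen_mod R (fun x => x \in S0)) 1.

Local Notation span s := (gen_mod R (fun x => x \in s)).

Let span_nz L : nz_submod R (span (L ++ S0)).
Proof.
split; first exact: gen_mod_submod.
by case: S0_nz => x xS x0; exists x; split=> //; apply: gen_mod_sub; rewrite // mem_cat xS orbT.
Qed.

Definition avoiding (I : K -> Prop) :=
  [/\ subset I R, forall x y, I x -> I y -> I (x + y), forall d x, R d -> I x -> I (d * x) &
      forall L, (forall x, x \in L -> I x) -> ~ star (span (L ++ S0)) 1].

Lemma avoiding_bigcup (F : (K -> Prop) -> Prop) :
  (forall I, F I -> avoiding I) -> (forall X Y, F X -> F Y -> subset X Y \/ subset Y X) ->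
  avoiding (fun x => exists2 I, F I & I x).
Proof.
move=> Favoid Ftot; split.
- by move=> x [I FI Ix]; have [IR _ _ _] := Favoid I FI; exact: IR.
- move=> x y [I FI Ix] [J FJ Jy]; have [IJ|JI] := Ftot I J FI FJ.
    by exists J => //; have [_ JD _ _] := Favoid J FJ; apply: JD (IJ x Ix) Jy.
  by exists I => //; have [_ ID _ _] := Favoid I FI; apply: ID Ix (JI y Jy).
- by move=> d x Rd [I FI Ix]; exists I => //; have [_ _ IM _] := Favoid I FI; exact: IM.
- move=> L HL; have [->|[I FI LI]] := chain_bigcup_seq Ftot HL; first exact: S0_avoid.
  by have [_ _ _ Iav] := Favoid I FI; exact: Iav.
Qed.

Lemma avoiding_add0 I : avoiding I -> avoiding (fun x => I x \/ x = 0).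
Proof.
case=> IR ID IM Iav; split.
- by move=> x [/IR //|->]; exact: subring0.
- by move=> x y [Ix|->] [Iy|->]; rewrite ?addr0 ?add0r; auto.
- by move=> d x Rd [Ix|->]; [left; exact: IM | right; rewrite mulr0].
- move=> L LI; have /Iav : forall x, x \in [seq x <- L | x != 0] -> I x.
    by move=> x; rewrite mem_filter => /andP[x0 /LI [] // /eqP]; rewrite (negbTE x0).
  apply: contra_not; apply: (star_mono (span_nz _) (span_nz _)) 1.
  apply: gen_mod_min (gen_mod_submod _ _) _ => // x; rewrite mem_cat => /orP[xL|xS].
    have [->|x0] := eqVneq x 0; first exact: gen_mod0.
    by apply: gen_mod_sub; rewrite // mem_cat mem_filter x0 xL.
  by apply: gen_mod_sub; rewrite // mem_cat xS orbT.
Qed.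

Section Maximal.
Variable M : K -> Prop.
Hypotheses (M_avoiding : avoiding M) (M_max : forall B, avoiding B -> subset M B -> subset B M).

Lemma max_avoiding0 : M 0.
Proof. by apply: (M_max (avoiding_add0 M_avoiding)) => [x|]; [left | right]. Qed.

Lemma span_adjoin c L : (forall x, x \in L -> exists m r, [/\ M m, R r & x = m + r * c]) ->
  exists2 L', (forall x, x \in L' -> M x) & subset (span (L ++ S0)) (span (c :: L' ++ S0)).
Proof.
elim: L => [|y L IH] HL.
  by exists [::] => //; apply: (gen_mod_mono R_subring) => x xS; rewrite inE xS orbT.
have [m [r [Mm Rr ->]]] := HL y (mem_head _ _).
have HL' x : x \in L -> exists m r, [/\ M m, R r & x = m + r * c].
  by move=> xL; apply: HL; rewrite inE xL orbT.
have [L' L'M sub] := IH HL'.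
exists (m :: L') => [x|]; first by rewrite inE => /orP[/eqP ->|/L'M].
apply: gen_mod_min (gen_mod_submod _ _) _ => // x; rewrite inE => /orP[/eqP ->|xLS].
  apply: gen_modD => //; [|apply: gen_modM => //];
  by apply: gen_mod_sub; rewrite // !inE eqxx ?orbT.
move: (sub x (gen_mod_sub R_subring xLS)); apply: (gen_mod_mono R_subring) => z.
by rewrite !inE => /orP[->|->]; rewrite ?orbT.
Qed.

Lemma star_one_adjoin c : R c -> ~ M c ->
  exists2 L, (forall x, x \in L -> M x) & star (span (c :: L ++ S0)) 1.
Proof.
have [MR MD MM _] := M_avoiding; have M0 := max_avoiding0.
move=> Rc nMc; pose B x := exists m r, [/\ M m, R r & x = m + r * c].
have [L LB starL] : exists2 L, (forall x, x \in L -> B x) & star (span (L ++ S0)) 1.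
  apply: NNPP => noL; apply: nMc; apply: (M_max (B := B)).
  - split.
    + by move=> _ [m [r [Mm Rr ->]]]; apply: subringD (MR m Mm) (subringM _ Rr Rc).
    + move=> _ _ [m [r [Mm Rr ->]]] [m' [r' [Mm' Rr' ->]]]; exists (m + m'), (r + r').
      by rewrite mulrDl addrACA; split=> //; [exact: MD | exact: subringD].
    + move=> d _ Rd [m [r [Mm Rr ->]]]; exists (d * m), (d * r).
      by rewrite mulrDr mulrA; split=> //; [exact: MM | exact: subringM].
    + by move=> L LB starL; apply: noL; exists L.
  - by move=> x Mx; exists x, 0; rewrite mul0r addr0; split=> //; exact: subring0.
  - by exists 0, 1; rewrite mul1r add0r; split=> //; exact: subring1.
have [L' L'M sub] := span_adjoin LB.
by exists L' => //; exact: star_mono (span_nz _) (span_nz (c :: L')) sub _ starL.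
Qed.

Lemma max_avoiding_S0 x : x \in S0 -> M x.
Proof.
move=> xS; apply: NNPP => /(star_one_adjoin (S0_R xS)) [L LM starL].
have [_ _ _ Mav] := M_avoiding; apply: (Mav L LM).
apply: star_mono (span_nz (x :: L)) (span_nz L) _ _ starL.
by apply: (gen_mod_mono R_subring) => z; rewrite inE => /orP[/eqP ->|//]; rewrite mem_cat xS orbT.
Qed.

Lemma max_avoiding_prime : prime_closed R M.
Proof.
have [MR MD MM Mav] := M_avoiding.
move=> a b Ra Rb Mab; apply: NNPP => /not_or_and [nMa nMb].
have [La LaM starLa] := star_one_adjoin Ra nMa.
have [Lb LbM starLb] := star_one_adjoin Rb nMb.
pose Lab := [seq x * y | x <- a :: La, y <- b :: Lb].
have LabM : forall z, z \in Lab -> M z.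
  move=> _ /allpairsP [[x y] [/= xa yb ->]]; move: xa yb; rewrite !inE.
  case/orP=> [/eqP -> | /LaM Mx] yb.
    by case/orP: yb => [/eqP -> //|/LbM My]; exact: MM.
  by rewrite mulrC; apply: MM Mx; case/orP: yb => [/eqP ->|/LbM /MR].
apply: (Mav Lab LabM); rewrite -(mulr1 1).
apply: star_mul (span_nz (a :: La)) (span_nz (b :: Lb)) (span_nz Lab) _ _ _ starLa starLb.
have R_span w l u : R w -> (forall x, x \in l -> M x) -> u \in w :: l ++ S0 -> R u.
  by move=> Rw lM; rewrite inE mem_cat => /orP[/eqP -> //|/orP[/lM/MR|/S0_R]].
apply: (gen_mod_mul R_subring) => s t sP tP.
have [sS|sS] := boolP (s \in S0).
  rewrite mulrC; apply: gen_modM (R_span _ _ _ Rb LbM tP) _ => //.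
  by apply: gen_mod_sub; rewrite // mem_cat sS orbT.
have [tS|tS] := boolP (t \in S0).
  apply: gen_modM (R_span _ _ _ Ra LaM sP) _ => //.
  by apply: gen_mod_sub; rewrite // mem_cat tS orbT.
apply: gen_mod_sub; rewrite // mem_cat; apply/orP; left; apply: allpairs_f.
  by move: sP; rewrite mem_cat (negbTE sS) orbF.
by move: tP; rewrite mem_cat (negbTE tS) orbF.
Qed.

End Maximal.

Lemma exists_prime_avoiding : exists M, [/\ is_ideal R M, prime_closed R M,
  forall x, x \in S0 -> M x & forall L, (forall x, x \in L -> M x) -> ~ star (span (L ++ S0)) 1].
Proof.
have [M Mav Mmax] := Zorn_maximal avoiding_bigcup.
exists M; have [MR MD MM Mavoid] := Mav; split=> //.
- by split=> //; split=> //; exact: max_avoiding0 Mav Mmax.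
- exact: max_avoiding_prime.
- exact: max_avoiding_S0.
Qed.
End PrimeAvoiding.
End Semistar.

Section Graded.
Variables (G : zmodType) (K : fieldType) (Gam : G -> Prop) (R : K -> Prop) (Rg : G -> K -> Prop).
Hypothesis gd : graded_domain Gam R Rg.
Let R_subring := gd_subring gd.

Lemma RgD a x y : Gam a -> Rg a x -> Rg a y -> Rg a (x + y).
Proof.
move=> Ga Rx Ry; rewrite -[y]opprK -[- y]sub0r.
exact: (gd_compB gd Ga Rx (gd_compB gd Ga (gd_comp0 gd Ga) Ry)).
Qed.

Definition is_decomp r s (f : G -> K) :=
  [/\ uniq s, forall a, a \in s -> Gam a /\ Rg a (f a) & r = \sum_(a <- s) f a].

Lemma is_decomp_widen r s f u : is_decomp r s f -> uniq u -> {subset s <= u} ->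
  (forall a, a \in u -> Gam a) -> is_decomp r u (fun a => if a \in s then f a else 0).
Proof.
move=> [us sRg ->] uu su uGam; split=> // [a au|].
  split; first exact: uGam.
  by case: ifP => [/sRg [] //|_]; exact: (gd_comp0 gd (uGam a au)).
rewrite -big_mkcond /= -(big_filter u); apply: perm_big.
apply: uniq_perm (filter_uniq _ uu) _ => // x.
by rewrite mem_filter; case: (boolP (x \in s)) => //= /su ->.
Qed.

Lemma is_decomp_unique r s f t g a : is_decomp r s f -> is_decomp r t g ->
  (if a \in s then f a else 0) = (if a \in t then g a else 0).
Proof.
move=> ds dt; pose u := undup (s ++ t).
have uu : uniq u by exact: undup_uniq.
have su : {subset s <= u} by move=> x xs; rewrite mem_undup mem_cat xs.
have tu : {subset t <= u} by move=> x xt; rewrite mem_undup mem_cat xt orbT.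
have uGam b : b \in u -> Gam b.
  by case: ds dt => _ sGam _ [_ tGam _]; rewrite mem_undup mem_cat => /orP[/sGam|/tGam] [].
have [_ sRg Es] := is_decomp_widen ds uu su uGam.
have [_ tRg Et] := is_decomp_widen dt uu tu uGam.
have [au|au] := boolP (a \in u); last first.
  by rewrite (contraNF (@su a)) ?(contraNF (@tu a)).
pose h b := (if b \in s then f b else 0) - (if b \in t then g b else 0).
apply/eqP; rewrite -subr_eq0; apply/eqP; apply: (gd_indep gd (f := h) uu) au; last first.
  by rewrite sumrB -Es -Et subrr.
move=> b bu; split; first exact: uGam.
apply: (gd_compB gd (uGam b bu)); [exact: (proj2 (sRg b bu)) | exact: (proj2 (tRg b bu))].
Qed.

(* [comp r a] is the degree-a component of r: by is_decomp_unique it does not depend on the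
   chosen decomposition, and it is meaningless unless [R r]. *)
Definition decomp (r : K) : seq G * (G -> K) :=
  epsilon (inhabits ([::], fun _ => 0)) (fun p => is_decomp r p.1 p.2).
Definition supp r := (decomp r).1.
Definition comp r a := if a \in supp r then (decomp r).2 a else 0.

Lemma decompP r : R r -> is_decomp r (supp r) (decomp r).2.
Proof.
move=> Rr; apply: (epsilon_spec _ (fun p => is_decomp r p.1 p.2)).
by have [s [f [us sRg Er]]] := gd_decomp gd Rr; exists (s, f).
Qed.

Lemma comp_decomp r s f a : is_decomp r s f -> comp r a = if a \in s then f a else 0.
Proof.
move=> d; rewrite /comp; apply: is_decomp_unique (d).
by apply: (epsilon_spec _ (fun p => is_decomp r p.1 p.2)); exists (s, f); exact: d.
Qed.

Lemma comp_out r a : a \notin supp r -> comp r a = 0.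
Proof. by rewrite /comp => /negbTE ->. Qed.

Lemma supp_uniq r : R r -> uniq (supp r).
Proof. by case/decompP. Qed.

Lemma supp_Gam r a : R r -> a \in supp r -> Gam a.
Proof. by case/decompP => _ H _ /H []. Qed.

Lemma comp_sumE r : R r -> r = \sum_(a <- supp r) comp r a.
Proof.
move=> Rr; have [_ _ {1}->] := decompP Rr.
by apply: eq_big_seq => a ai; rewrite /comp ai.
Qed.

Lemma comp_Rg r a : R r -> Gam a -> Rg a (comp r a).
Proof.
move=> Rr Ga; rewrite /comp; case: ifP => [ai|_]; last exact: (gd_comp0 gd Ga).
by have [_ H _] := decompP Rr; case: (H a ai).
Qed.

Lemma comp_R r a : R r -> R (comp r a).
Proof.
move=> Rr; have [ai|ai] := boolP (a \in supp r); last by rewrite comp_out //; exact: subring0.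
by have Ga := supp_Gam Rr ai; exact: (gd_compR gd Ga (comp_Rg Rr Ga)).
Qed.

Lemma comp0 a : comp 0 a = 0.
Proof.
have d : is_decomp 0 [::] (fun _ => 0) by split; rewrite ?big_nil.
by rewrite (comp_decomp a d).
Qed.

Lemma comp_homog d v c : Gam d -> Rg d v -> comp v c = if c == d then v else 0.
Proof.
move=> Gd Rv; have D : is_decomp v [:: d] (fun _ => v).
  by split=> // [a|]; [rewrite inE => /eqP -> | rewrite big_seq1].
by rewrite (comp_decomp c D) inE.
Qed.

Lemma compD x y a : R x -> R y -> comp (x + y) a = comp x a + comp y a.
Proof.
move=> Rx Ry; pose u := undup (supp x ++ supp y).
have uu : uniq u by exact: undup_uniq.
have xu : {subset supp x <= u} by move=> z zs; rewrite mem_undup mem_cat zs.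
have yu : {subset supp y <= u} by move=> z zs; rewrite mem_undup mem_cat zs orbT.
have uGam b : b \in u -> Gam b.
  by rewrite mem_undup mem_cat => /orP[] /supp_Gam; [apply | apply].
have [_ xRg Ex] := is_decomp_widen (decompP Rx) uu xu uGam.
have [_ yRg Ey] := is_decomp_widen (decompP Ry) uu yu uGam.
have D : is_decomp (x + y) u (fun a => comp x a + comp y a).
  split=> // [b bu|]; last by rewrite big_split /= {1}Ex {1}Ey.
  split; first exact: uGam.
  exact: RgD (uGam b bu) (proj2 (xRg b bu)) (proj2 (yRg b bu)).
rewrite (comp_decomp a D); case: ifP => // /negbT au.
by rewrite !comp_out ?addr0 //; apply: contra au; [apply: yu | apply: xu].
Qed.

Lemma comp_sum (I : Type) (r : seq I) (F : I -> K) a : (forall i, R (F i)) ->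
  comp (\sum_(i <- r) F i) a = \sum_(i <- r) comp (F i) a.
Proof.
move=> RF; elim: r => [|i r IH]; first by rewrite !big_nil comp0.
rewrite !big_cons compD ?IH //; apply: big_ind => //; [exact: subring0 | exact: subringD].
Qed.

Lemma comp_mul x y c : R x -> R y -> comp (x * y) c =
  \sum_(a <- supp x) \sum_(b <- supp y) (if c == a + b then comp x a * comp y b else 0).
Proof.
move=> Rx Ry; rewrite {1}(comp_sumE Rx) {1}(comp_sumE Ry) big_distrl /= comp_sum; last first.
  move=> a; rewrite mulr_sumr; apply: big_ind => [|u v|b _]; [exact: subring0 | exact: subringD |].
  exact: (subringM R_subring (comp_R a Rx) (comp_R b Ry)).
apply: eq_big_seq => a ai; rewrite big_distrr /= comp_sum => [|b]; last first.
  exact: (subringM R_subring (comp_R a Rx) (comp_R b Ry)).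
apply: eq_big_seq => b bi; have [Ga Gb] := (supp_Gam Rx ai, supp_Gam Ry bi).
exact: (comp_homog _ (gd_monD gd Ga Gb) (gd_compM gd Ga Gb (comp_Rg Rx Ga) (comp_Rg Ry Gb))).
Qed.

Lemma comp_coefM f g n c : polyR R f -> polyR R g -> comp (f * g)`_n c =
  \sum_(k <- iota 0 n.+1) \sum_(a <- supp f`_k) \sum_(b <- supp g`_(n - k))
    (if c == a + b then comp f`_k a * comp g`_(n - k) b else 0).
Proof.
move=> Rf Rg'; rewrite coefM -(big_mkord xpredT (fun k => f`_k * g`_(n - k))) /index_iota subn0.
rewrite comp_sum => [|k]; last exact: (subringM R_subring (Rf k) (Rg' _)).
by apply: eq_bigr => k _; rewrite comp_mul.
Qed.

Lemma hcompP r x : R r -> hcomp Gam Rg r x <-> exists2 a, Gam a & x = comp r a.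
Proof.
move=> Rr; split=> [[s [f [a [us sRg Er ai ->]]]]|[a Ga ->]].
  by exists a; [case: (sRg a ai) | rewrite (comp_decomp a (And3 us sRg Er)) ai].
have [us sRg Er] := decompP Rr.
have [ai|ai] := boolP (a \in supp r).
  by exists (supp r), (decomp r).2, a; rewrite /comp ai.
exists (a :: supp r), (fun b => if b == a then 0 else (decomp r).2 b), a; split.
- by rewrite /= ai us.
- move=> b; rewrite inE; case: eqP => [-> _|_ /= /sRg //]; split=> //; exact: (gd_comp0 gd Ga).
- rewrite big_cons eqxx add0r {1}Er; apply: eq_big_seq => b bi.
  by case: eqP => // ba; rewrite -ba bi in ai.
- exact: mem_head.
- by rewrite eqxx comp_out.
Qed.

Definition coef_comps (h : {poly K}) : seq K :=
  [seq comp h`_i a | i <- iota 0 (size h), a <- supp h`_i].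

Lemma Af_comp h i a : polyR R h -> Gam a -> Af Gam R Rg h (comp h`_i a).
Proof.
move=> Rh Ga; have [ih|hi] := ltnP i (size h); last first.
  by rewrite nth_default // comp0; exact: gen_mod0.
by apply: gen_mod_sub => //; exists i; split=> //; apply/hcompP => //; exists a.
Qed.

Lemma Af_coef h i : polyR R h -> Af Gam R Rg h h`_i.
Proof.
move=> Rh; rewrite (comp_sumE (Rh i)) big_seq.
apply: big_ind => [|x y|a ai]; [exact: gen_mod0 | exact: gen_modD |].
exact: Af_comp (supp_Gam _ ai).
Qed.

Lemma coef_comps_R h : polyR R h -> forall x, x \in coef_comps h -> R x.
Proof. by move=> Rh _ /allpairsPdep [i [a [_ _ ->]]]; exact: comp_R. Qed.

Lemma Af_spanE h : polyR R h -> Af Gam R Rg h = gen_mod R (fun x => x \in coef_comps h).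
Proof.
move=> Rh; have sub : subset (Af Gam R Rg h) (gen_mod R (fun x => x \in coef_comps h)).
  apply: (gen_mod_min (gen_mod_submod R_subring _)) => _ [i [ih /hcompP [//|a Ga ->]]].
  have [ai|ai] := boolP (a \in supp h`_i); last by rewrite comp_out //; exact: gen_mod0.
  by apply: gen_mod_sub; rewrite // (allpairs_f_dep (fun i a => comp h`_i a)) ?mem_iota.
have bus : subset (gen_mod R (fun x => x \in coef_comps h)) (Af Gam R Rg h).
  apply: (gen_mod_min (gen_mod_submod R_subring _)) => _ /allpairsPdep [i [a [_ ai ->]]].
  exact: Af_comp (supp_Gam _ ai).
by apply: functional_extensionality => x; apply: propositional_extensionality; split=> [/sub|/bus].
Qed.

Lemma coef_comps_nz h : polyR R h -> h != 0 -> exists2 x, x \in coef_comps h & x != 0.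
Proof.
move=> Rh h0; apply: NNPP => noz; move: h0; rewrite -lead_coef_eq0; apply/negP/negPn/eqP.
rewrite /lead_coef (comp_sumE (Rh _)); apply: big1_seq => a /andP[_ ai].
apply: NNPP => ca0; apply: noz; exists (comp h`_(size h).-1 a); last exact/eqP.
rewrite (allpairs_f_dep (fun i a => comp h`_i a)) // mem_iota add0n /=.
by rewrite prednK // lt0n size_poly_eq0; apply/eqP => h0; apply: ca0; rewrite h0 coef0 comp0.
Qed.

Lemma Af_nz h : polyR R h -> h != 0 -> nz_submod R (Af Gam R Rg h).
Proof.
move=> Rh h0; rewrite Af_spanE //; split; first exact: gen_mod_submod.
by have [x xh x0] := coef_comps_nz Rh h0; exists x; split=> //; exact: gen_mod_sub.
Qed.

Lemma Af_subset_R h : polyR R h -> subset (Af Gam R Rg h) R.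
Proof.
move=> Rh; rewrite Af_spanE //; apply: (gen_mod_min (subring_submod R_subring)).
exact: coef_comps_R.
Qed.

Lemma Af_sum_subset n (q : 'I_n -> {poly K}) P : (forall i, polyR R (q i)) -> polyR R P ->
  (forall i t, exists s, (q i)`_t = P`_s) ->
  subset (Af Gam R Rg (\sum_(i < n) q i)) (Af Gam R Rg P).
Proof.
move=> Rq RP qP; apply: (gen_mod_min (gen_mod_submod R_subring _)) => x [t [_ xt]].
have [a Ga ->] := (hcompP x (polyR_sum R_subring _ Rq t)).1 xt.
rewrite coef_sum comp_sum => [|i]; last exact: Rq.
apply: big_ind => [|u v|i _]; [exact: gen_mod0 | exact: gen_modD |].
by have [s ->] := qP i t; exact: Af_comp.
Qed.

Section Gauss.
Variable M : K -> Prop.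
Hypotheses (M_ideal : is_ideal R M) (M_prime : prime_closed R M).

Definition comps_in (f : {poly K}) := forall i a, M (comp f`_i a).

Lemma ideal_sum (I : eqType) (s : seq I) (F : I -> K) :
  (forall x, x \in s -> M (F x)) -> M (\sum_(x <- s) F x).
Proof.
have [_ [M0 MD _]] := M_ideal.
by move=> MF; rewrite big_seq; apply: big_ind => // x /MF.
Qed.

Lemma ideal_sum_single (I : eqType) (s : seq I) (F : I -> K) x0 : uniq s -> x0 \in s ->
  (forall x, x \in s -> x != x0 -> M (F x)) -> M (\sum_(x <- s) F x) -> M (F x0).
Proof.
have [_ [_ MD MM]] := M_ideal.
move=> us x0s MF; rewrite (bigD1_seq x0) //= => Msum.
have Mrest : M (\sum_(x <- s | x != x0) F x).
  rewrite big_seq_cond; apply: big_ind => [|u v|x /andP[]]; last exact: MF.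
    by case: M_ideal => _ [].
  exact: MD.
have := MD _ _ Msum (MM (-1) _ (subringN R_subring (subring1 R_subring)) Mrest).
by rewrite mulN1r addrK.
Qed.

Variable le : G -> G -> Prop.
Hypotheses (le_total : forall x y, le x y \/ le y x)
  (le_trans : forall x y z, le x y -> le y z -> le x z)
  (le_anti : forall x y, le x y -> le y x -> x = y)
  (le_add : forall x y z, le x y -> le (x + z) (y + z)).

Lemma le_add_eq a b a0 b0 : le a a0 -> le b b0 -> a0 + b0 = a + b -> a = a0.
Proof.
move=> la lb E; apply: (addIr b); apply: le_anti; first exact: le_add.
by rewrite -E ![a0 + _]addrC; exact: le_add.
Qed.

Lemma lex_max_comp_notin f : polyR R f -> ~ comps_in f -> exists i0 a0, ~ M (comp f`_i0 a0) /\
  forall i a, ~ M (comp f`_i a) -> (i < i0)%N \/ (i = i0 /\ le a a0).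
Proof.
have [_ [M0 _ _]] := M_ideal.
move=> Rf /not_all_ex_not [i /not_all_ex_not [a bad]].
pose lex (p q : nat * G) := (p.1 < q.1)%N \/ (p.1 = q.1 /\ le p.2 q.2).
have lex_total p q : lex p q \/ lex q p.
  rewrite /lex; case: (ltngtP p.1 q.1) => pq; [by left; left | by right; left |].
  by case: (le_total p.2 q.2); [left | right]; right.
have lex_trans p q r : lex p q -> lex q r -> lex p r.
  rewrite /lex => -[pq|[-> pq]] [qr|[<- qr]]; [left; exact: ltn_trans qr | by left | by left | ].
  by right; split=> //; exact: le_trans qr.
have bad_in j b : ~ M (comp f`_j b) ->
    (j, b) \in [seq (j, b) | j <- iota 0 (size f), b <- supp f`_j].
  move=> nM; apply/allpairsPdep; exists j, b; split=> //.
    by rewrite mem_iota add0n ltnNge; apply/negP => fj; apply: nM; rewrite nth_default ?comp0.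
  by apply: contraT => bj; case: nM; rewrite comp_out.
have [[i0 a0] [_ bad0 max0]] :=
  max_seq (P := fun p => ~ M (comp f`_p.1 p.2)) lex_total lex_trans
    (ex_intro2 _ _ (i, a) (bad_in _ _ bad) bad).
by exists i0, a0; split=> // j b nM; exact: (max0 (j, b) (bad_in _ _ nM) nM).
Qed.

Lemma gauss_comps_ordered f g : polyR R f -> polyR R g ->
  comps_in (f * g) -> comps_in f \/ comps_in g.
Proof.
have [MR [M0 _ MM]] := M_ideal.
move=> Rf Rg' Mfg; apply: NNPP => /not_or_and [nf ng].
have [i0 [a0 [bad_f max_f]]] := lex_max_comp_notin Rf nf.
have [j0 [b0 [bad_g max_g]]] := lex_max_comp_notin Rg' ng.
set n := (i0 + j0)%N; set c := a0 + b0; have En : n = (i0 + j0)%N by [].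
pose T k a b := if c == a + b then comp f`_k a * comp g`_(n - k) b else 0.
have E : comp (f * g)`_n c =
    \sum_(k <- iota 0 n.+1) \sum_(a <- supp f`_k) \sum_(b <- supp g`_(n - k)) T k a b.
  exact: comp_coefM Rf Rg'.
(* By maximality of (i0, a0) and (j0, b0), only the term T i0 a0 b0 can lie outside M. *)
have T_M k a b : (k <= n)%N -> (k != i0) || (a != a0) -> M (T k a b).
  move=> kn ne; rewrite /T; case: eqP => [cab|_ //].
  have [Mfa|nfa] := classic (M (comp f`_k a)); first by rewrite mulrC; apply: MM Mfa; exact: comp_R.
  have [Mgb|ngb] := classic (M (comp g`_(n - k) b)); first by apply: MM Mgb; exact: comp_R.
  have [ki|[ki la]] := max_f k a nfa; have [kj|[kj lb]] := max_g (n - k)%N b ngb;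
    try by clear -ki kj kn En; lia.
  by move: ne; rewrite ki eqxx (le_add_eq la lb cab) eqxx.
have in_supp h k a : ~ M (comp h`_k a) -> a \in supp h`_k.
  by move=> nM; apply: contraT => /comp_out hka; rewrite hka in nM.
have nj0 : (n - i0)%N = j0 by lia.
have i0n : i0 \in iota 0 n.+1 by rewrite mem_iota; lia.
have := Mfg n c; rewrite E => /(ideal_sum_single (iota_uniq 0 n.+1) i0n) Mi0.
have {Mi0} : M (\sum_(a <- supp f`_i0) \sum_(b <- supp g`_j0) T i0 a b).
  rewrite -nj0; apply: Mi0 => k; rewrite mem_iota => kn ki.
  by apply: ideal_sum => a _; apply: ideal_sum => b _; apply: T_M; [lia | rewrite ki].
move=> /(ideal_sum_single (supp_uniq (Rf i0)) (in_supp _ _ _ bad_f)) Ma0.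
have {Ma0} : M (\sum_(b <- supp g`_j0) T i0 a0 b).
  apply: Ma0 => a _ aa0; apply: ideal_sum => b _; apply: T_M; [lia | by rewrite aa0 orbT].
move=> /(ideal_sum_single (supp_uniq (Rg' j0)) (in_supp _ _ _ bad_g)) Mb0.
have {Mb0} : M (T i0 a0 b0).
  apply: Mb0 => b _ bb0; rewrite /T; case: eqP => [/addrI eb|_ //].
  by rewrite eb eqxx in bb0.
rewrite /T eqxx nj0 => /M_prime [||Mf|Mg]; [exact: comp_R | exact: comp_R | |].
  exact: bad_f.
exact: bad_g.
Qed.
End Gauss.

Lemma comps_inP M h : M 0 -> comps_in M h <-> forall x, x \in coef_comps h -> M x.
Proof.
move=> M0; split=> [Mh _ /allpairsPdep [i [a [_ _ ->]]] // | Mh i a].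
have [ih|hi] := ltnP i (size h); last by rewrite nth_default // comp0.
have [ai|ai] := boolP (a \in supp h`_i); last by rewrite comp_out.
by apply: Mh; rewrite (allpairs_f_dep (fun i a => comp h`_i a)) // mem_iota.
Qed.

Lemma gauss_comps M f g : is_ideal R M -> prime_closed R M -> polyR R f -> polyR R g ->
  comps_in M (f * g) -> comps_in M f \/ comps_in M g.
Proof.
have [le [le_total le_trans le_anti le_add]] := torsionfree_order (gd_torsionfree gd).
by move=> Mid Mprime; exact: (gauss_comps_ordered Mid Mprime le_total le_trans le_anti le_add).
Qed.
End Graded.

Section NagataRing.
Variables (G : zmodType) (K : fieldType) (Gam : G -> Prop) (R : K -> Prop) (Rg : G -> K -> Prop).
Variable star : (K -> Prop) -> (K -> Prop).
Hypotheses (gd : graded_domain Gam R Rg) (star_semistar : semistar R star).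
Let R_subring := gd_subring gd.
Local Notation Nstar := (Nstar Gam R Rg star).
Local Notation NA := (NA Gam R Rg star).

Lemma Nstar_one f : Nstar f -> star (Af Gam R Rg f) 1.
Proof.
case=> _ _ E; apply/E; apply: (star_ext star_semistar (nz_submod_R R_subring)).
exact: subring1.
Qed.

Lemma NstarP f : polyR R f -> f != 0 -> star (Af Gam R Rg f) 1 -> Nstar f.
Proof.
move=> Rf f0 f1; split=> //.
exact: star_eq_starR (Af_nz gd Rf f0) (Af_subset_R gd Rf) f1.
Qed.

Lemma Nstar_mul f g : Nstar f -> Nstar g -> Nstar (f * g).
Proof.
move=> Nf Ng; have [Rf f0 _] := Nf; have [Rg' g0 _] := Ng.
have Rfg := polyR_mul R_subring Rf Rg'; have fg0 := mulf_neq0 f0 g0.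
apply: NstarP => //; apply: NNPP; rewrite (Af_spanE gd Rfg) => nfg.
have [M [Mid Mprime MS0 Mavoid]] := exists_prime_avoiding R_subring star_semistar
  (coef_comps_R gd Rfg) (coef_comps_nz gd Rfg fg0) nfg.
have [MR [M0 _ _]] := Mid.
have not_comps_in h : Nstar h -> comps_in Gam Rg M h -> False.
  move=> Nh Mh; have [Rh h0 _] := Nh.
  have sub : subset (Af Gam R Rg h)
      (gen_mod R (fun x => x \in coef_comps Gam Rg h ++ coef_comps Gam Rg (f * g))).
    by rewrite (Af_spanE gd Rh); apply: (gen_mod_mono R_subring) => x xh; rewrite mem_cat xh.
  apply: (Mavoid _ ((comps_inP gd h M0).1 Mh)).
  apply: (star_mono star_semistar (Af_nz gd Rh h0) _ sub) (Nstar_one Nh).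
  exact: nz_submod_superset (Af_nz gd Rh h0) (gen_mod_submod R_subring _) sub.
have /(gauss_comps gd Mid Mprime Rf Rg') [] := (comps_inP gd _ M0).2 MS0.
  exact: not_comps_in.
exact: not_comps_in.
Qed.

Local Notation tf := (@FracField.tofrac _).

Lemma Nstar1 : Nstar 1.
Proof.
have R1 : polyR R 1 by rewrite -(expr0 'X); exact: polyR_Xn.
apply: NstarP => //; first exact: oner_neq0.
apply: (star_ext star_semistar (Af_nz gd R1 (oner_neq0 _))).
by have := Af_coef gd 0 R1; rewrite coef1.
Qed.

Lemma NA1 : NA 1.
Proof. by exists 1, 1; rewrite divr1 rmorph1; split=> //; [case: Nstar1 | exact: Nstar1]. Qed.

Lemma NA_poly p : polyR R p -> NA (tf p).
Proof. by move=> Rp; exists p, 1; split=> //; [exact: Nstar1 | rewrite rmorph1 divr1]. Qed.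

Lemma NA_mul x y : NA x -> NA y -> NA (x * y).
Proof.
move=> [p [q [Rp Nq ->]]] [p' [q' [Rp' Nq' ->]]]; exists (p * p'), (q * q'); split.
- exact: polyR_mul.
- exact: Nstar_mul.
- by rewrite !rmorphM mulf_div.
Qed.

Lemma NA_common_den (T : eqType) (s : seq T) (w : T -> {fraction {poly K}}) :
  (forall t, t \in s -> NA (w t)) -> exists Q (p : T -> {poly K}),
    Nstar Q /\ forall t, t \in s -> polyR R (p t) /\ w t = tf (p t) / tf Q.
Proof.
elim: s => [|t0 s IH] NAw; first by exists 1, (fun _ => 0); split=> //; exact: Nstar1.
have [|Q [p [NQ pQ]]] := IH; first by move=> t ts; apply: NAw; rewrite inE ts orbT.
have [p0 [q0 [Rp0 Nq0 E0]]] := NAw t0 (mem_head _ _).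
have [[RQ Q0 _] [Rq0 q00 _]] := (NQ, Nq0).
exists (q0 * Q), (fun t => if t == t0 then p0 * Q else p t * q0); split; first exact: Nstar_mul.
move=> t; rewrite inE; case: eqP => [-> _|_ /= ts].
  split; first exact: polyR_mul.
  by rewrite E0 !rmorphM -mulf_div divff ?mulr1 // tofrac_eq0.
have [Rpt Et] := pQ t ts; split; first exact: polyR_mul.
by rewrite Et !rmorphM [tf q0 * _]mulrC -mulf_div divff ?mulr1 // tofrac_eq0.
Qed.

Lemma exists_Nstar_product (I J : {fraction {poly K}} -> Prop) :
  is_submod NA I -> is_submod NA J -> (forall u v, I u -> J v -> NA (u * v)) -> prod_mod I J 1 ->
  exists x y P Q, [/\ I x, J y, Nstar P, Nstar Q & x * y = tf P / tf Q].
Proof.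
move=> [I0 ID IM] [J0 JD JM] IJ [n [a [b [ab E1]]]].
have [Q [p [NQ pQ]]] := @NA_common_den _ (enum {: 'I_n * 'I_n}) (fun ij => a ij.1 * b ij.2)
  (fun ij _ => IJ _ _ (ab ij.1 (ltn_ord _)).1 (ab ij.2 (ltn_ord _)).2).
have {}pQ i j : polyR R (p (i, j)) /\ a i * b j = tf (p (i, j)) / tf Q.
  by apply: pQ; rewrite mem_enum.
have [RQ Q0 _] := NQ.
pose D := (\max_ij size (p ij)).+1.
have size_p ij : (size (p ij) <= D)%N by apply: leqW; exact: leq_bigmax.
pose P := kronecker D p.
pose x := \sum_(i < n) tf 'X^(D * i) * a i.
pose y := \sum_(j < n) tf 'X^(D * n * j) * b j.
have EQ : Q = \sum_(i < n) p (i, i).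
  apply/eqP; rewrite -tofrac_eq; apply/eqP; have tQ0 : tf Q != 0 by rewrite tofrac_eq0.
  apply: (mulIf (invr_neq0 tQ0)); rewrite divff // rmorph_sum mulr_suml E1.
  by apply: eq_bigr => i _; rewrite (pQ i i).2.
have RP : polyR R P by apply: polyR_kronecker => // -[i j]; exact: (pQ i j).1.
have P0 : P != 0 by apply: contraNneq Q0 => /(kronecker_eq0 size_p) p0; rewrite EQ big1.
have AfQP : subset (Af Gam R Rg Q) (Af Gam R Rg P).
  rewrite EQ; apply: (Af_sum_subset gd _ RP) => [i|i t]; first exact: (pQ i i).1.
  exact: coef_kronecker_exists.
exists x, y, P, Q; split=> //.
- apply: big_ind => // i _; apply: IM; last exact: (ab i (ltn_ord i)).1.
  exact: NA_poly (polyR_Xn R_subring _).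
- apply: big_ind => // j _; apply: JM; last exact: (ab j (ltn_ord j)).2.
  exact: NA_poly (polyR_Xn R_subring _).
- apply: NstarP => //; apply: (star_mono star_semistar (Af_nz gd RQ Q0) (Af_nz gd RP P0) AfQP).
  exact: Nstar_one.
have -> : x * y = \sum_(i < n) \sum_(j < n) (tf 'X^(D * i) * tf 'X^(D * n * j)) * (a i * b j).
  rewrite big_distrl; apply: eq_bigr => i _; rewrite big_distrr; apply: eq_bigr => j _ /=.
  by rewrite mulrACA.
rewrite exchange_big /P /kronecker rmorph_sum mulr_suml; apply: eq_bigr => j _.
rewrite rmorphM rmorph_sum !mulr_suml; apply: eq_bigr => i _.
rewrite (pQ i j).2 rmorphM; ring.
Qed.
End NagataRing.

Theorem theorem2p7 (G : zmodType) (K : fieldType) (Gam : G -> Prop)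
    (R : K -> Prop) (Rg : G -> K -> Prop) (star : (K -> Prop) -> (K -> Prop)) :
  graded_domain Gam R Rg ->
  semistar R star ->
  psubset (star R) (RH Gam R Rg) ->
  forall I : {fraction {poly K}} -> Prop,
    invertible_ideal (NA Gam R Rg star) I -> principal_ideal (NA Gam R Rg star) I.
Proof.
move=> gd star_semistar _ I [[INA Imod] [J [Jmod IJ]]].
have IJ_NA u v : I u -> J v -> NA Gam R Rg star (u * v).
  move=> Iu Jv; apply/IJ; exists 1%N, (fun _ => u), (fun _ => v).
  by rewrite big_ord1; split.
have [x [y [P [Q [Ix Jy NP NQ Exy]]]]] :=
  exists_Nstar_product gd star_semistar Imod Jmod IJ_NA ((IJ 1).2 (NA1 gd star_semistar)).
apply: (principal_of_unit_mul (NA_mul gd star_semistar) (conj INA Imod) IJ_NA Ix Jy).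
  by rewrite Exy mulf_neq0 ?invr_neq0 // tofrac_eq0; [case: NP | case: NQ].
by rewrite Exy invf_div; exists Q, P; split=> //; case: NQ.
Qed.
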